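(* For every $n \geq 2$, the set $\{d_{n1}\}$ is equidistributed.
   Context: A linear arrangement of $\{1,\ldots,n\}$ is a sequence $a_1\cdots a_n$ in which each of $1,\ldots,n$ appears exactly once. It contains the pattern $ij$ if $a_t=i$ and $a_{t+1}=j$ for some $t$; otherwise it avoids it. $\{d_{n1}\}$ is the set of linear arrangements of $\{1,\ldots,n\}$ that avoid all of the patterns $12, 23, \ldots, (n-1)n$ and contain the pattern $n1$. For a set $X$ of linear arrangements of $\{1,\ldots,n\}$ and $i\in\{1,\ldots,n\}$, the class $X^{(i)}$ is the set of arrangements in $X$ whose first entry is $i$. $X$ is called equidistributed if it is partitioned into its nonempty classes and all nonempty classes $X^{(i)}$ have the same cardinality. *)

From mathcomp Require Import all_boot.
Set Implicit Arguments. Unset Strict Implicit. Unset Printing Implicit Defensive.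

Definition arrangement (n : nat) (s : seq nat) : bool := perm_eq s (iota 1 n).

Definition contains_pat (s : seq nat) (i j : nat) : bool :=
  has (fun t => (nth 0 s t == i) && (nth 0 s t.+1 == j)) (iota 0 (size s).-1).

(* The set {d_{n1}} of arrangements of {1..n} avoiding 12, 23, ..., (n-1)n and
   containing n1, as a duplicate-free list (permutations enumerates every
   arrangement exactly once). *)
Definition d_n1 (n : nat) : seq (seq nat) :=
  [seq s <- permutations (iota 1 n) |
     all (fun k => ~~ contains_pat s k k.+1) (iota 1 n.-1) && contains_pat s n 1].

Definition arr_class (X : seq (seq nat)) (i : nat) : seq (seq nat) :=
  [seq s <- X | head 0 s == i].

Definition equidistributed (n : nat) (X : seq (seq nat)) : Prop :=
  forall i j, 1 <= i <= n -> 1 <= j <= n ->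
    size (arr_class X i) != 0 -> size (arr_class X j) != 0 ->
    size (arr_class X i) = size (arr_class X j).

From mathcomp Require Import all_boot zify.
Set Implicit Arguments. Unset Strict Implicit. Unset Printing Implicit Defensive.

(* Write m = n - 1 and call an arrangement of {1..m} cyclic-succession-free if
   it contains none of the patterns 12, ..., (m-1)m, m1.  Raising every entry by
   one and inserting 1 right after m+1 is a bijection from these arrangements onto
   {d_n1} (its inverse deletes 1 and lowers every entry), sending first entry i to
   first entry i+1; the class of 1 in {d_n1} is empty because 1 always follows n.
   Adding 1 modulo m to every entry maps the cyclic-succession-free arrangements
   starting with j injectively to those starting with j+1 mod m, and going around
   the cycle forces all these classes to have the same size. *)

Definition adj_pairs (s : seq nat) : seq (nat * nat) := zip s (behead s).

Lemma adj_pairs_cons2 x y s : adj_pairs [:: x, y & s] = (x, y) :: adj_pairs (y :: s).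
Proof. by []. Qed.

Lemma contains_patE s i j : contains_pat s i j = ((i, j) \in adj_pairs s).
Proof.
elim: s => [|x [|y s] IH] //.
rewrite adj_pairs_cons2 in_cons -IH /contains_pat /= -[1]/(1 + 0) iotaDl has_map /=.
by rewrite xpair_eqE [x == i]eq_sym [y == j]eq_sym.
Qed.

Lemma adj_pairs_map f s :
  adj_pairs (map f s) = [seq (f p.1, f p.2) | p <- adj_pairs s].
Proof. by elim: s => [|x [|y s] IH] //; rewrite /= -IH. Qed.

Lemma mem_adj_pairs s a b :
  (a, b) \in adj_pairs s -> (a \in s) && (b \in behead s).
Proof.
elim: s => [|x [|y s] IH] //; rewrite adj_pairs_cons2 in_cons.
case/orP => [/eqP [-> ->]|/IH /andP [ays bs]]; first by rewrite !mem_head.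
by rewrite in_cons ays (mem_behead bs) !orbT.
Qed.

Lemma adj_pairs_split s a b :
  (a, b) \in adj_pairs s -> exists s1 s2, s = s1 ++ [:: a, b & s2].
Proof.
elim: s => [|x [|y s] IH] //; rewrite adj_pairs_cons2 in_cons.
case/orP => [/eqP [-> ->]|/IH [s1 [s2 ->]]]; first by exists [::], s.
by exists (x :: s1), s2.
Qed.

Lemma mem_arr_class X i s : (s \in arr_class X i) = (head 0 s == i) && (s \in X).
Proof. exact: mem_filter. Qed.

Definition contract (s : seq nat) := [seq v.-1 | v <- s & v != 1].

Lemma contract_cat s1 s2 : contract (s1 ++ s2) = contract s1 ++ contract s2.
Proof. by rewrite /contract filter_cat map_cat. Qed.

Lemma contract_cons v s : v != 1 -> contract (v :: s) = v.-1 :: contract s.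
Proof. by rewrite /contract /= => ->. Qed.

Lemma perm_contract n s : perm_eq s (iota 1 n.+1) -> perm_eq (contract s) (iota 1 n).
Proof.
move=> ps; apply: perm_trans (perm_map _ (perm_filter _ ps)) _.
rewrite /= (all_filterP _); last by apply/allP => v; rewrite mem_iota; lia.
by rewrite -[2]/(1 + 1) iotaDl -map_comp map_id.
Qed.

Lemma head_d_n1 n s : s \in d_n1 n -> head 0 s != 1.
Proof.
rewrite mem_filter mem_permutations contains_patE => /andP [/andP [_ adj] ps].
case: s adj ps => [|x s] // /mem_adj_pairs /andP [_ one_s] /perm_uniq.
by rewrite iota_uniq /= => /andP [x_out _]; apply: contraNneq x_out => ->.
Qed.

Section CyclicSuccessions.

Variable m : nat.

(* Fixing 0 keeps [csucc] injective on all of nat. *)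
Definition csucc v := if v == 0 then 0 else if v == m then 1 else v.+1.

Lemma csucc_inj : injective csucc.
Proof.
move=> x y; rewrite /csucc.
by case: (x =P 0); case: (y =P 0); case: (x =P m); case: (y =P m); lia.
Qed.

Definition no_csucc t := all (fun p => p.2 != csucc p.1) (adj_pairs t).

Definition csucc_free := [seq t <- permutations (iota 1 m) | no_csucc t].

Lemma mem_csucc_free t : (t \in csucc_free) = perm_eq t (iota 1 m) && no_csucc t.
Proof. by rewrite mem_filter mem_permutations andbC. Qed.

Lemma perm_csucc_iota : perm_eq (map csucc (iota 1 m)) (iota 1 m).
Proof.
have sub_iota : {subset map csucc (iota 1 m) <= iota 1 m}.
  by move=> _ /mapP [v + ->]; rewrite !mem_iota /csucc; case: (v =P 0); case: (v =P m); lia.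
have uniq_map : uniq (map csucc (iota 1 m)).
  by rewrite (map_inj_uniq csucc_inj) iota_uniq.
apply: (uniq_perm uniq_map (iota_uniq _ _)).
by have [] := uniq_min_size uniq_map sub_iota; rewrite ?size_map ?size_iota.
Qed.

Lemma map_csucc_free t : t \in csucc_free -> map csucc t \in csucc_free.
Proof.
rewrite !mem_csucc_free => /andP [pt nt]; apply/andP; split.
  exact: perm_trans (perm_map csucc pt) perm_csucc_iota.
rewrite /no_csucc adj_pairs_map all_map; apply: sub_all nt => -[a b] /=.
by rewrite (inj_eq csucc_inj).
Qed.

Lemma size_class_map_csucc j :
  size (arr_class csucc_free j) <= size (arr_class csucc_free (csucc j)).
Proof.
rewrite -(size_map (map csucc)); apply: uniq_leq_size.
  by rewrite (map_inj_uniq (inj_map csucc_inj)) !filter_uniq ?permutations_uniq.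
move=> _ /mapP [t + ->]; rewrite !mem_arr_class => /andP [/eqP <- tR].
by rewrite (map_csucc_free tR) andbT; case: t {tR}.
Qed.

Lemma csucc_free_notin0 t : t \in csucc_free -> 0 \notin t.
Proof. by rewrite mem_csucc_free => /andP [pt _]; rewrite (perm_mem pt) mem_iota. Qed.

Definition expand_entry a := if a == m then [:: m.+1; 1] else [:: a.+1].

Definition expand t := flatten (map expand_entry t).

Lemma expand_cons a t : expand (a :: t) = expand_entry a ++ expand t.
Proof. by []. Qed.

Lemma expand_cat t1 t2 : expand (t1 ++ t2) = expand t1 ++ expand t2.
Proof. by rewrite /expand map_cat flatten_cat. Qed.

Lemma head_expand a t : head 0 (expand (a :: t)) = a.+1.
Proof. by rewrite expand_cons /expand_entry; case: eqP => [->|]. Qed.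

Lemma mem_adj_expand t x y : 0 \notin t ->
  ((x, y) \in adj_pairs (expand t)) =
  [&& x == m.+1, y == 1 & m \in t]
  || ((x, y) \in [seq (csucc p.1, p.2.+1) | p <- adj_pairs t]).
Proof.
elim: t => [|a [|b t] IH]; first by rewrite !andbF.
  rewrite in_cons negb_or => /andP [a0 _].
  rewrite /= in_nil orbF mem_seq1 [m == a]eq_sym /expand /= /expand_entry.
  by case: (a =P m) => _; rewrite ?andbT ?andbF // mem_seq1 xpair_eqE.
rewrite in_cons negb_or => /andP [a0 t0].
have [r er] : exists r, expand (b :: t) = b.+1 :: r.
  by rewrite expand_cons /expand_entry; case: eqP => [->|]; eexists.
rewrite expand_cons er adj_pairs_cons2 map_cons [(x, y) \in _ :: _]in_cons.
rewrite [m \in _]in_cons [m == a]eq_sym.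
have -> : csucc a = if a == m then 1 else a.+1.
  by rewrite /csucc [a == 0]eq_sym (negbTE a0).
rewrite /expand_entry; case: (a =P m) => [->|_] /=.
  rewrite !adj_pairs_cons2 -er !in_cons IH // !xpair_eqE andbT andbA.
  by case: (_ && (y == 1)).
by rewrite adj_pairs_cons2 -er in_cons IH // orbCA.
Qed.

Lemma contract_expand_entry a : a != 0 -> contract (expand_entry a) = [:: a].
Proof.
by rewrite /expand_entry; case: (a =P m) => [->|_] a0; rewrite contract_cons ?eqSS.
Qed.

Lemma contract_expand t : 0 \notin t -> contract (expand t) = t.
Proof.
elim: t => [|a t IH] //; rewrite in_cons negb_or => /andP [a0 t0].
by rewrite expand_cons contract_cat contract_expand_entry 1?eq_sym // IH.
Qed.

Lemma expand_contract_inner x : {in x, forall v, 1 < v <= m} -> expand (contract x) = x.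
Proof.
move=> x_mid; have -> : contract x = map predn x.
  by rewrite /contract (all_filterP _) //; apply/allP => v /x_mid; lia.
rewrite /expand -map_comp -[RHS]flatten_seq1; congr flatten; apply/eq_in_map => v /x_mid vr.
by rewrite /= /expand_entry ifN_eq ?prednK //; lia.
Qed.

Hypothesis m_gt0 : 0 < m.

Lemma expand_iota : perm_eq (expand (iota 1 m)) (iota 1 m.+1).
Proof.
have def_m : m = m.-1 + 1 by rewrite addn1 prednK.
have -> : expand (iota 1 m) = iota 2 m.-1 ++ [:: m.+1; 1].
  rewrite {1}def_m iotaD expand_cat addnC -def_m /expand /= /expand_entry eqxx cats0.
  congr (_ ++ _); rewrite -[2]/(1 + 1) iotaDl -[X in _ = X]flatten_map1; congr flatten.
  by apply/eq_in_map => a; rewrite mem_iota => /andP [_ am]; rewrite ifN_eq //; lia.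
rewrite -[[:: m.+1; 1]]/([:: m.+1] ++ [:: 1]) catA perm_catC /=.
by rewrite [in iota 2 m]def_m iotaD add2n prednK.
Qed.

Lemma perm_expand t : perm_eq t (iota 1 m) -> perm_eq (expand t) (iota 1 m.+1).
Proof. by move=> pt; apply: perm_trans expand_iota; apply/perm_flatten/perm_map. Qed.

Lemma size_class_csucc_free j : 1 <= j <= m ->
  size (arr_class csucc_free j) = size (arr_class csucc_free 1).
Proof.
pose c j := size (arr_class csucc_free j); pose D := [pred j | 1 <= j <= m].
have c_homo : {in D &, {homo c : i k / i <= k}}.
  apply: homo_leq_in => // [|i k|i]; first exact: leq_trans.
    by rewrite !inE => /andP [i1 _] /andP [_ km] l /andP [il lk]; apply/andP; lia.
  rewrite !inE => /andP [i1 _] /andP [_ im]; have := size_class_map_csucc i.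
  by rewrite /csucc !ifN_eq //; lia.
have c_m : c m <= c 1.
  by have := size_class_map_csucc m; rewrite /csucc ifN_eq ?eqxx //; lia.
have [D1 Dm] : 1 \in D /\ m \in D by rewrite !inE /= leqnn m_gt0.
move=> /[dup] Dj /andP [j_gt0 jm]; apply/eqP; rewrite eqn_leq (c_homo 1 j) // andbT.
exact: leq_trans (c_homo j m Dj Dm jm) c_m.
Qed.

Lemma expand_d_n1 t : t \in csucc_free -> expand t \in d_n1 m.+1.
Proof.
move=> /[dup] /csucc_free_notin0 t0; rewrite mem_csucc_free => /andP [pt nt].
rewrite mem_filter mem_permutations perm_expand // andbT /=.
rewrite contains_patE mem_adj_expand // !eqxx (perm_mem pt) mem_iota m_gt0.
rewrite add1n ltnSn /= andbT.
apply/allP => k; rewrite mem_iota contains_patE mem_adj_expand // => /andP [_ km].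
rewrite negb_or ltn_eqF //=; apply/negP; case/mapP => -[a b] ab [-> b_csucc].
by move/allP/(_ _ ab): nt; rewrite /= b_csucc eqxx.
Qed.

Lemma expand_contract s : s \in d_n1 m.+1 -> expand (contract s) = s.
Proof.
rewrite mem_filter mem_permutations contains_patE => /andP [/andP [_]].
case/adj_pairs_split => [s1 [s2 ->]] ps.
have ps' : perm_eq [:: m.+1, 1 & s1 ++ s2] (iota 1 m.+1).
  by rewrite -(perm_catCA s1 [:: m.+1; 1] s2).
have /and3P [m1_out one_out _] : uniq [:: m.+1, 1 & s1 ++ s2].
  by rewrite (perm_uniq ps') iota_uniq.
have mid v : v \in s1 ++ s2 -> 1 < v <= m.
  move=> vs; have := perm_mem ps' v; rewrite mem_iota !inE vs !orbT.
  have : v != 1 by apply: contraNneq one_out => <-.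
  have : v != m.+1 by apply: contraNneq m1_out => <-; rewrite inE vs orbT.
  lia.
rewrite contract_cat contract_cons ?eqSS -?lt0n // -[contract (1 :: s2)]/(contract s2).
rewrite expand_cat expand_cons /expand_entry eqxx !expand_contract_inner // => v vs;
  by apply: mid; rewrite mem_cat vs ?orbT.
Qed.

Lemma contract_d_n1 s : s \in d_n1 m.+1 -> contract s \in csucc_free.
Proof.
move=> sD; have := sD; rewrite mem_filter mem_permutations => /andP [/andP [no_succ _] ps].
have pc := perm_contract ps; rewrite mem_csucc_free pc.
apply/allP => -[a b] ab /=; apply/eqP => b_csucc.
have /andP [_ /mem_behead] := mem_adj_pairs ab.
rewrite (perm_mem pc) mem_iota => b_range.
have /allP/(_ b) := no_succ; rewrite mem_iota /= => /(_ b_range) /negP; apply.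
rewrite contains_patE -(expand_contract sD) mem_adj_expand ?(perm_mem pc) ?mem_iota //.
by apply/orP; right; apply/mapP; exists (a, b); rewrite // b_csucc.
Qed.

Lemma size_class_d_n1 i : 0 < i ->
  size (arr_class (d_n1 m.+1) i.+1) = size (arr_class csucc_free i).
Proof.
move=> i_gt0; rewrite -(size_map expand (arr_class csucc_free i)).
apply: perm_size; apply: uniq_perm.
- by rewrite !filter_uniq ?permutations_uniq.
- rewrite (map_inj_in_uniq (f := expand)) ?filter_uniq ?permutations_uniq // => t u.
  rewrite !mem_arr_class => /andP [_ /csucc_free_notin0 t0] /andP [_ /csucc_free_notin0 u0].
  by move/(congr1 contract); rewrite !contract_expand.
move=> s; rewrite mem_arr_class; apply/andP/mapP => [[/eqP hs sD] | [t + ->]].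
  exists (contract s); last by rewrite expand_contract.
  rewrite mem_arr_class contract_d_n1 // andbT.
  by case: s hs {sD} => //= v s ->; rewrite contract_cons -?lt0n.
rewrite mem_arr_class => /andP [/eqP ht tR]; rewrite expand_d_n1 //.
by case: t ht tR => [|a t] ht; [rewrite -ht in i_gt0 | rewrite head_expand -ht].
Qed.

End CyclicSuccessions.

Theorem proposition4p9 (n : nat) : 2 <= n -> equidistributed n (d_n1 n).
Proof.
case: n => [|m] // /ltnSE m_gt0.
suff class_size k : 1 <= k <= m.+1 -> size (arr_class (d_n1 m.+1) k) != 0 ->
    size (arr_class (d_n1 m.+1) k) = size (arr_class (csucc_free m) 1).
  by move=> i j /class_size hi /class_size hj /hi -> /hj ->.
case: k => [|[|k]] // /andP [_ km].
  by rewrite size_filter -lt0n -has_count => /hasP [s /head_d_n1 /negP].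
by rewrite size_class_d_n1 // => _; apply: size_class_csucc_free.
Qed.
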